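(* Let $\alpha>-1$, let $\{\lambda_n\}_{n=0}^\infty$ be a sequence of real numbers, and let $T:\mathbb{R}[x]\to\mathbb{R}[x]$ be the linear operator defined by $T(L_n^{(\alpha)}(x))=\lambda_nL_n^{(\alpha)}(x)$ for all $n\in\mathbb{N}$. Then the symbol of $T$ is $$G_T(x,y)=e^{-xy}\sum_{n=0}^{\infty}a_n y^n L_n^{(\alpha)}(xy+x),\qquad a_n=\sum_{k=0}^{n}(-1)^{n-k}\binom{n}{k}\lambda_k,$$ as an identity of formal power series in $y$ with polynomial coefficients in $x$.
   Context: For $\alpha>-1$, $L_n^{(\alpha)}(x)=\sum_{k=0}^{n}\binom{n+\alpha}{n-k}\frac{(-x)^k}{k!}$, where $\binom{m+\alpha}{j}=\frac{(m+\alpha)\cdots(m+\alpha-j+1)}{j!}$. The symbol of a linear operator $T:\mathbb{R}[x]\to\mathbb{R}[x]$ is the formal power series $G_T(x,y)=\sum_{n=0}^\infty \frac{(-1)^nT(x^n)}{n!}y^n$ (formally, $G_T=T(e^{-xy})$ with $T$ acting in $x$). *)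

From HB Require Import structures.
From mathcomp Require Import all_boot all_order all_algebra.
Set Implicit Arguments. Unset Strict Implicit. Unset Printing Implicit Defensive.
Import Order.TTheory GRing.Theory Num.Theory.
Local Open Scope ring_scope.

Definition gbinom (R : fieldType) (r : R) (j : nat) : R :=
  (\prod_(i < j) (r - i%:R)) / (j`!)%:R.

Definition laguerre (R : fieldType) (alpha : R) (n : nat) : {poly R} :=
  \sum_(k < n.+1) (gbinom (n%:R + alpha) (n - k) * ((-1) ^+ k / (k`!)%:R)) *: 'X^k.

(* Formal power series in y with coefficients in R[x] are represented by
   their coefficient sequences nat -> {poly R}. *)

(* coefficient of y^n in the symbol G_T(x,y) = sum_n (-1)^n T(x^n)/n! y^n *)
Definition symbol_coef (R : fieldType) (T : {poly R} -> {poly R}) (n : nat)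
  : {poly R} := ((-1) ^+ n / (n`!)%:R) *: T 'X^n.

(* coefficient of y^j in e^{-xy} = sum_j (-x)^j/j! y^j *)
Definition expmxy_coef (R : fieldType) (j : nat) : {poly R} :=
  ((-1) ^+ j / (j`!)%:R) *: 'X^j.

(* L_m^(alpha)(xy + x) as a polynomial in y (outer variable) with
   coefficients in R[x] (inner variable). *)
Definition laguerre_shift (R : fieldType) (alpha : R) (m : nat)
  : {poly {poly R}} :=
  (map_poly polyC (laguerre alpha m)) \Po ((('X : {poly R})%:P) * ('X + 1)).

Definition acoef (R : fieldType) (lam : nat -> R) (n : nat) : R :=
  \sum_(k < n.+1) (-1) ^+ (n - k) * ('C(n, k))%:R * lam k.

(* coefficient of y^k in sum_m a_m y^m L_m(xy+x) *)
Definition laguerre_series_coef (R : fieldType) (alpha : R) (lam : nat -> R)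
  (k : nat) : {poly R} :=
  \sum_(m < k.+1) acoef lam m *: (laguerre_shift alpha m)`_(k - m).

(* coefficient of y^N in e^{-xy} * sum_m a_m y^m L_m(xy+x) (Cauchy product) *)
Definition rhs_coef (R : fieldType) (alpha : R) (lam : nat -> R) (N : nat)
  : {poly R} :=
  \sum_(j < N.+1) expmxy_coef R j * laguerre_series_coef alpha lam (N - j).

From HB Require Import structures.
From mathcomp Require Import all_boot all_order all_algebra.
From mathcomp Require Import ring zify.
Set Implicit Arguments. Unset Strict Implicit. Unset Printing Implicit Defensive.
Import Order.TTheory GRing.Theory Num.Theory.
Local Open Scope ring_scope.

(* Write e_j = (-1)^j / j!, so that the coefficient of y^N in G_T is
   e_N T(x^N), and put w_{N,n} = (-1)^(N+n) binom(N+alpha, N-n).  The proof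
   compares both sides in the Laguerre basis through the "bridge polynomials"
     P_{N,k}(x) = sum_i e_i C(i, N-k) binom(N+alpha, N-i) x^i      (k <= N).
   1. (Laguerre side) P_{N,k} = sum_n C(n,k) w_{N,n} L_n; for k = 0 this is
      the inverse expansion e_N x^N = sum_n w_{N,n} L_n.
   2. (Symbol side) the coefficient of y^(N-k) in e^{-xy} L_k(xy+x) is
      P_{N,k}; hence the coefficient of y^N of the right-hand side equals
      sum_k a_k P_{N,k}.
   3. Binomial inversion sum_k a_k C(n,k) = lambda_n then identifies
      sum_k a_k P_{N,k} with sum_n lambda_n w_{N,n} L_n = T(e_N x^N). *)

Section SumManipulations.
Variable V : nmodType.

Lemma sum_delta (R : pzSemiRingType) n M (F : nat -> R) :
  \sum_(j < n) F j * (j == M :> nat)%:R = if (M < n)%N then F M else 0.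
Proof.
rewrite (eq_bigr (fun j : 'I_n => if (j == M :> nat) then F j else 0)).
  by rewrite -big_mkcond big_ord1_eq.
by move=> j _; case: eqP; rewrite ?mulr1 ?mulr0.
Qed.

Lemma sum_from_shift (F : nat -> V) s n : (s <= n)%N ->
  \sum_(t < n.+1) (if (s <= t)%N then F t else 0) =
  \sum_(u < (n - s).+1) F (s + u)%N.
Proof.
move=> hs; rewrite -(big_mkord xpredT (fun t => if (s <= t)%N then F t else 0)).
rewrite (big_cat_nat (n:=s)) /=; [|by []|by lia].
rewrite big_nat_cond big1 ?add0r; last first.
  by move=> i /andP [/andP [_ h] _]; rewrite leqNgt h.
rewrite -{1}(add0n s) big_addn -subSn // big_mkord.
by apply: eq_bigr => i _; rewrite leq_addl addnC.
Qed.

Lemma sum_trunc n N (F : nat -> V) : (n <= N)%N ->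
  (forall k, (n < k)%N -> F k = 0) ->
  \sum_(k < N.+1) F k = \sum_(k < n.+1) F k.
Proof.
move=> hn hF; rewrite [RHS](big_ord_widen N.+1 F) // [RHS]big_mkcond.
by apply: eq_bigr => k _; case: ltnP => // h; rewrite hF.
Qed.

Lemma sum_rev n (F : nat -> V) :
  \sum_(j < n.+1) F j = \sum_(u < n.+1) F (n - u)%N.
Proof.
rewrite -(big_mkord xpredT F) big_rev_mkord subn0.
by apply: eq_bigr => u _; rewrite subSS.
Qed.

End SumManipulations.

Section BinomialIdentities.
Variable R : numFieldType.

Lemma natr_fact_neq0 n : (n`!)%:R != 0 :> R.
Proof. by rewrite pnatr_eq0 -lt0n fact_gt0. Qed.

Lemma natr_bin_fact n k : (k <= n)%N ->
  ('C(n, k))%:R = (n`!)%:R / ((k`!)%:R * ((n - k)`!)%:R) :> R.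
Proof.
by move=> h; rewrite -(bin_fact h) !natrM mulfK // mulf_neq0 // natr_fact_neq0.
Qed.

Lemma signr_add_double a b c : (b = a + 2 * c)%N -> (-1) ^+ b = (-1) ^+ a :> R.
Proof. by move=> ->; rewrite exprD exprM expr2 mulrNN mulr1 expr1n mulr1. Qed.

(* Choosing u+s out of M and then s out of those is choosing s out of M and
   then u out of the remaining M-s. *)
Lemma natr_bin_choose_twice M s u : (u + s <= M)%N ->
  ('C(M, u + s) * 'C(u + s, s))%:R = ('C(M, s) * 'C(M - s, u))%:R :> R.
Proof.
move=> h; rewrite !natrM !natr_bin_fact; try lia.
rewrite addnK (_ : (M - s - u = M - (u + s))%N); last by lia.
have := natr_fact_neq0 (u + s); have := natr_fact_neq0 s.
have := natr_fact_neq0 u; have := natr_fact_neq0 (M - s).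
have := natr_fact_neq0 (M - (u + s)).
by move=> h1 h2 h3 h4 h5; field; rewrite h1 h2 h3 h4 h5.
Qed.

Lemma alternating_bin_orthogonality M s :
  \sum_(t < M.+1) (-1) ^+ (M + t) * ('C(M, t) * 'C(t, s))%:R =
  (s == M)%:R :> R.
Proof.
case: (leqP s M) => hs; last first.
  rewrite big1; first by rewrite (gtn_eqF hs).
  by move=> t _; rewrite (bin_small (leq_trans (ltn_ord t) hs)) muln0 mulr0.
pose F t : R := (-1) ^+ (M + t) * ('C(M, t) * 'C(t, s))%:R.
rewrite (eq_bigr (fun t : 'I_M.+1 => if (s <= t)%N then F t else 0)); last first.
  by move=> t _; case: leqP => // h; rewrite /F (bin_small h) muln0 mulr0.
rewrite sum_from_shift //.
have binomial_term (u : 'I_(M - s).+1) : F (s + u)%N =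
    ('C(M, s))%:R * (((-1) ^+ (M - s - u) * 1 ^+ u) *+ 'C(M - s, u)).
  rewrite /F (addnC s u) natr_bin_choose_twice; last by have := ltn_ord u; lia.
  rewrite expr1n mulr1 natrM mulrCA mulr_natr; congr (_ * (_ *+ _)).
  by apply: (@signr_add_double _ _ (u + s)%N); have := ltn_ord u; lia.
rewrite (eq_bigr _ (fun u _ => binomial_term u)) -mulr_sumr -exprDn addNr.
rewrite expr0n; case: (eqVneq s M) => [->|hne]; first by rewrite subnn binn mulr1.
by rewrite (_ : (M - s == 0)%N = false) ?mulr0 //; lia.
Qed.

Lemma binomial_inversion (lam : nat -> R) n N : (n <= N)%N ->
  \sum_(k < N.+1) acoef lam k * ('C(n, k))%:R = lam n.
Proof.
move=> hn; rewrite (@sum_trunc _ n N (fun k => acoef lam k * ('C(n, k))%:R) hn);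
  last by move=> k hk; rewrite bin_small // mulr0.
have expand_acoef (k : 'I_n.+1) : acoef lam k * ('C(n, k))%:R =
    \sum_(l < n.+1) lam l * ((-1) ^+ (k - l) * ('C(n, k) * 'C(k, l))%:R).
  have hk : (k <= n)%N by rewrite -ltnS.
  rewrite /acoef -(@sum_trunc _ k n (fun l => (-1) ^+ (k - l) *
      ('C(k, l))%:R * lam l) hk); last by move=> l hl; rewrite bin_small // mulr0 mul0r.
  by rewrite mulr_suml; apply: eq_bigr => l _; rewrite natrM; ring.
rewrite (eq_bigr _ (fun k _ => expand_acoef k)) exchange_big /=.
have inner (l : 'I_n.+1) : \sum_(k < n.+1) lam l * ((-1) ^+ (k - l) *
    ('C(n, k) * 'C(k, l))%:R) = lam l * (l == n :> nat)%:R.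
  rewrite -mulr_sumr; congr (_ * _).
  rewrite (eq_bigr (fun k : 'I_n.+1 => (-1) ^+ (n + l) *
      ((-1) ^+ (n + k) * ('C(n, k) * 'C(k, l))%:R))); last first.
    move=> k _; case: (leqP l k) => h; last by rewrite (bin_small h) muln0 !mulr0.
    by rewrite mulrA -exprD (@signr_add_double (k - l) _ (n + l)) //; lia.
  rewrite -mulr_sumr alternating_bin_orthogonality; case: eqP => [->|]; last by rewrite mulr0.
  by rewrite (@signr_add_double 0 _ n) ?expr0 ?mulr1 //; lia.
by rewrite (eq_bigr _ (fun l _ => inner l)) (sum_delta n.+1 n lam) ltnSn.
Qed.

(* A signed binomial convolution, combining Vandermonde's identity with the
   orthogonality relation. *)
Lemma alternating_bin_convolution N k i : (i <= N)%N -> (k <= N)%N ->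
  \sum_(n < N.+1) (-1) ^+ (N + n) * ('C(n, k))%:R *
     (if (i <= n)%N then ('C(N - i, n - i))%:R else 0) = ('C(i, N - k))%:R :> R.
Proof.
move=> hi hk.
pose F n : R := (-1) ^+ (N + n) * ('C(n, k))%:R * ('C(N - i, n - i))%:R.
rewrite (eq_bigr (fun n : 'I_N.+1 => if (i <= n)%N then F n else 0)); last first.
  by move=> n _; case: ifP; rewrite ?mulr0.
rewrite sum_from_shift //; set M := (N - i)%N.
have vandermonde (u : 'I_M.+1) : F (i + u)%N = \sum_(j < k.+1)
    ('C(i, k - j))%:R * ((-1) ^+ (M + u) * ('C(M, u) * 'C(u, j))%:R).
  rewrite /F (addnC i u) -binomial.Vandermonde natr_sum mulr_sumr mulr_suml.
  apply: eq_bigr => j _; rewrite addnC addnK !natrM.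
  by rewrite (@signr_add_double (M + u) (u + i + N) i); [ring | rewrite /M; lia].
rewrite (eq_bigr _ (fun u _ => vandermonde u)) exchange_big /=.
rewrite (eq_bigr (fun j : 'I_k.+1 => ('C(i, k - j))%:R * (j == M :> nat)%:R));
  last by move=> j _; rewrite -mulr_sumr alternating_bin_orthogonality.
rewrite (sum_delta k.+1 M (fun j => ('C(i, k - j))%:R)); case: ltnP => h.
  rewrite -bin_sub; last by rewrite /M; lia.
  by congr (_%:R); congr 'C(_, _); rewrite /M; lia.
by rewrite bin_small //; rewrite /M in h; lia.
Qed.

Lemma gbinom0 (r : R) : gbinom r 0 = 1.
Proof. by rewrite /gbinom big_ord0 fact0 divr1. Qed.

Lemma gbinom_pascal (r : R) j :
  gbinom (r + 1) j.+1 = gbinom r j.+1 + gbinom r j.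
Proof.
rewrite /gbinom big_ord_recl big_ord_recr /=.
have -> : \prod_(i < j) (r + 1 - (bump 0 i)%:R) = \prod_(i < j) (r - i%:R).
  by apply: eq_bigr => i _; rewrite /bump /= add1n -addn1 natrD; ring.
rewrite factS natrM.
have h1 := natr_fact_neq0 j.
have h2 : (1 + j%:R : R) != 0 by rewrite addrC natr1 pnatr_eq0.
by set P := \prod_(i < j) _; field; rewrite h1 h2.
Qed.

Lemma gbinom_vandermonde M (r : R) t :
  \sum_(u < M.+1) ('C(M, u))%:R * (if (t < u)%N then 0 else gbinom r (t - u))
  = gbinom (r + M%:R) t.
Proof.
elim: M t => [|M IH] t.
  by rewrite big_ord_recl big_ord0 bin0 mul1r addr0 addr0 /= subn0.
have IH' : \sum_(u < M.+2) ('C(M, u))%:R *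
      (if (t < u)%N then 0 else gbinom r (t - u)) = gbinom (r + M%:R) t.
  by rewrite big_ord_recr /= bin_small // mul0r addr0 IH.
case: t IH IH' => [|t] IH IH'.
  rewrite big_ord_recl bin0 mul1r /= subn0 big1 ?addr0 ?gbinom0 //.
  by move=> u _; rewrite mulr0.
rewrite big_ord_recl /=.
under eq_bigr => u _ do rewrite /bump /= add1n binS natrD mulrDl ltnS subSS.
rewrite big_split /= IH addrA -natr1 addrA gbinom_pascal -IH'; congr (_ + _).
by rewrite [in RHS]big_ord_recl !bin0 !mul1r !subn0.
Qed.

Lemma gbinom_vandermonde_rev (s : R) N M i : (M <= i <= N)%N ->
  \sum_(j < M.+1) ('C(M, j))%:R * (if (i - j < (N - M).+1)%N
      then gbinom ((N - M)%:R + s) ((N - M) - (i - j)) else 0)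
  = gbinom (N%:R + s) (N - i).
Proof.
case/andP => hMi hiN.
rewrite (sum_rev _ (fun j => ('C(M, j))%:R * (if (i - j < (N - M).+1)%N
    then gbinom ((N - M)%:R + s) ((N - M) - (i - j)) else 0))).
rewrite (eq_bigr (fun u : 'I_M.+1 => ('C(M, u))%:R * (if (N - i < u)%N then 0
     else gbinom ((N - M)%:R + s) (N - i - u)))); last first.
  move=> u _; have hu := ltn_ord u; rewrite bin_sub; last by lia.
  case: (ltnP (N - i) u) => h.
    by rewrite ifF ?mulr0 //; apply/negbTE; rewrite -leqNgt; lia.
  by rewrite ifT; [congr (_ * gbinom _ _); lia | lia].
rewrite gbinom_vandermonde; congr gbinom.
by rewrite natrB; [ring | lia].
Qed.

Lemma gbinom_trinomial (s : R) a b :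
  gbinom s a * gbinom (s - a%:R) b = gbinom s (a + b) * ('C(a + b, b))%:R.
Proof.
rewrite /gbinom big_split_ord /=.
have -> : \prod_(i < b) (s - (rshift a i : nat)%:R) =
          \prod_(i < b) (s - a%:R - i%:R).
  by apply: eq_bigr => i _; rewrite /= natrD opprD addrA.
have hf := bin_fact (leq_addl a b); rewrite addnK in hf.
have -> : ((a + b)`!)%:R = ('C(a + b, b))%:R * (b`!)%:R * (a`!)%:R :> R.
  by rewrite -hf !natrM mulrA.
have h1 := natr_fact_neq0 a; have h2 := natr_fact_neq0 b.
have h3 : ('C(a + b, b))%:R != 0 :> R by rewrite pnatr_eq0 -lt0n bin_gt0 leq_addl.
by set P1 := \prod_(i < a) _; set P2 := \prod_(i < b) _; field; rewrite h1 h2 h3.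
Qed.

Definition sign_fact (j : nat) : R := (-1) ^+ j / (j`!)%:R.

Lemma sign_fact_mul i j : (j <= i)%N ->
  sign_fact j * sign_fact (i - j) = sign_fact i * ('C(i, j))%:R.
Proof.
move=> h; rewrite /sign_fact natr_bin_fact //.
rewrite (_ : (-1) ^+ i = (-1) ^+ j * (-1) ^+ (i - j) :> R); last by rewrite -exprD subnKC.
have h2 := natr_fact_neq0 j; have h3 := natr_fact_neq0 (i - j).
by have h1 := natr_fact_neq0 i; field; rewrite h2 h3.
Qed.

End BinomialIdentities.

Lemma coef_X_add1_exp (S : comNzRingType) l r :
  ((('X : {poly S}) + 1) ^+ l)`_r = ('C(l, r))%:R.
Proof.
rewrite addrC exprDn coef_sum.
rewrite (eq_bigr (fun i : 'I_l.+1 => if (i == r :> nat) then ('C(l, r))%:R else 0)).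
  rewrite -big_mkcond (big_ord1_eq _ (fun=> ('C(l, r))%:R : S)).
  by case: ltnP => // h; rewrite bin_small.
move=> i _; rewrite expr1n mul1r coefMn coefXn; case: eqP => [->|h].
  by rewrite eqxx.
by rewrite ifF ?mul0rn //; apply/eqP => e; apply: h; rewrite e.
Qed.

Section LinearOperator.
Variables (R : fieldType) (T : {poly R} -> {poly R}).
Hypothesis T_lin : forall (c : R) (p q : {poly R}), T (c *: p + q) = c *: T p + T q.

Lemma lin_op0 : T 0 = 0.
Proof.
have h := T_lin 1 0 0; rewrite scaler0 addr0 scale1r in h.
by apply: (addrI (T 0)); rewrite addr0 -h.
Qed.

Lemma lin_opZ c p : T (c *: p) = c *: T p.
Proof. by rewrite -[c *: p]addr0 T_lin lin_op0 addr0. Qed.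

Lemma lin_op_sum K (c : nat -> R) (p : nat -> {poly R}) :
  T (\sum_(n < K) c n *: p n) = \sum_(n < K) c n *: T (p n).
Proof.
elim: K => [|K IH]; first by rewrite !big_ord0 lin_op0.
by rewrite !big_ord_recr /= addrC T_lin IH addrC.
Qed.

End LinearOperator.

Section LaguerreExpansions.
Variables (R : numFieldType) (alpha : R).

Definition laguerre_coef n l := gbinom (n%:R + alpha) (n - l) * sign_fact R l.

Lemma laguerre_poly n : laguerre alpha n = \poly_(l < n.+1) laguerre_coef n l.
Proof. by rewrite poly_def. Qed.

Lemma coef_laguerre n i :
  (laguerre alpha n)`_i = if (i < n.+1)%N then laguerre_coef n i else 0.
Proof. by rewrite laguerre_poly coef_poly. Qed.

Definition laguerre_weight N n := (-1) ^+ (N + n) * gbinom (N%:R + alpha) (N - n).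

Definition bridge_poly N k : {poly R} :=
  \poly_(i < N.+1) (sign_fact R i * ('C(i, N - k))%:R * gbinom (N%:R + alpha) (N - i)).

Lemma bridge_poly_laguerre N k : (k <= N)%N ->
  \sum_(n < N.+1) (('C(n, k))%:R * laguerre_weight N n) *: laguerre alpha n =
  bridge_poly N k.
Proof.
move=> hk; apply/polyP => i; rewrite coef_sum coef_poly.
under eq_bigr => n _ do rewrite coefZ coef_laguerre.
case: ltnP => hi; last first.
  rewrite big1 // => n _; rewrite ifF ?mulr0 //.
  by apply/negbTE; rewrite -leqNgt; apply: leq_trans hi; rewrite ltnS -ltnS.
rewrite -(alternating_bin_convolution R (hi : (i <= N)%N) hk) mulrAC mulr_sumr.
apply: eq_bigr => n _; have hn := ltn_ord n.
case: ltnP => hin; last by rewrite ifF ?mulr0 ?mul0r //; apply/negbTE; rewrite -ltnNge.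
rewrite ifT // /laguerre_coef /laguerre_weight.
have := gbinom_trinomial (N%:R + alpha) (N - n) (n - i).
rewrite (_ : (N - n + (n - i) = N - i)%N); last by lia.
rewrite (_ : N%:R + alpha - (N - n)%:R = n%:R + alpha); last by rewrite natrB; [ring | lia].
move: (gbinom _ (N - n)) (gbinom _ (n - i)) (gbinom _ (N - i)) => g1 g2 g3 trin.
transitivity (('C(n, k))%:R * (-1) ^+ (N + n) * sign_fact R i * (g1 * g2)); first ring.
by rewrite trin; ring.
Qed.

Lemma bridge_poly0 N : bridge_poly N 0 = expmxy_coef R N.
Proof.
apply/polyP => i; rewrite coef_poly coefZ coefXn subn0.
case: ltnP => h.
  case: (eqVneq i N) => [->|ne]; first by rewrite binn subnn gbinom0 !mulr1.
  by rewrite bin_small ?mulr0 ?mul0r //; rewrite ltn_neqAle ne -ltnS.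
by rewrite (_ : (i == N) = false) ?mulr0 //; apply/negbTE; rewrite neq_ltn h orbT.
Qed.

Lemma coef_laguerre_shift k r : (laguerre_shift alpha k)`_r =
  \sum_(l < k.+1) (laguerre_coef k l * ('C(l, r))%:R) *: 'X^l.
Proof.
rewrite /laguerre_shift laguerre_poly poly_def raddf_sum /=.
under eq_bigr do rewrite map_polyZ map_polyXn.
rewrite raddf_sum coef_sum; apply: eq_bigr => l _.
rewrite /= comp_polyZ comp_Xn_poly coefZ exprMn -rmorphXn coefCM coef_X_add1_exp /=.
rewrite -mul_polyC rmorphM /= mulrA !polyCM rmorph_nat /laguerre_coef /sign_fact; ring.
Qed.

Lemma coef_shift_product M k j i :
  (expmxy_coef R j * (laguerre_shift alpha k)`_(M - j))`_i =
  sign_fact R j * (if (i < j)%N then 0 else if (i - j < k.+1)%N then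
     laguerre_coef k (i - j) * ('C(i - j, M - j))%:R else 0).
Proof.
rewrite /expmxy_coef -scalerAl coefZ coefXnM; congr (_ * _).
case: ltnP => // _; rewrite coef_laguerre_shift coef_sum.
under eq_bigr do rewrite coefZ coefXn eq_sym.
exact: (sum_delta _ _ (fun l => laguerre_coef k l * ('C(l, M - j))%:R)).
Qed.

Lemma shift_product_bridge N k : (k <= N)%N ->
  \sum_(j < (N - k).+1) expmxy_coef R j * (laguerre_shift alpha k)`_(N - k - j)
  = bridge_poly N k.
Proof.
move=> hk; apply/polyP => i; rewrite coef_sum coef_poly.
set M := (N - k)%N; have hkM : k = (N - M)%N by rewrite /M; lia.
rewrite (eq_bigr _ (fun (j : 'I_M.+1) _ => coef_shift_product M k j i)).
case: ltnP => hi; last first.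
  rewrite big1 // => j _; case: ltnP => _; first by rewrite mulr0.
  by rewrite ifF ?mulr0 //; have := ltn_ord j; rewrite /M; lia.
case: (ltnP i M) => hM.
  rewrite (bin_small hM) mulr0 mul0r big1 // => j _.
  case: ltnP => hij; first by rewrite mulr0.
  by case: ifP => _; rewrite ?mulr0 // bin_small ?mulr0 ?mul0r //; lia.
have factor_out (j : 'I_M.+1) : sign_fact R j * (if (i < j)%N then 0 else
    if (i - j < k.+1)%N then laguerre_coef k (i - j) * ('C(i - j, M - j))%:R
    else 0) = sign_fact R i * ('C(i, M))%:R * (('C(M, j))%:R *
    (if (i - j < k.+1)%N then gbinom (k%:R + alpha) (k - (i - j)) else 0)).
  have hj := ltn_ord j.
  rewrite ifF; last by apply/negbTE; rewrite -leqNgt; lia.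
  case: ifP => _; last by rewrite !mulr0.
  have e2 : ('C(i, M) * 'C(M, j))%:R = ('C(i, j) * 'C(i - j, M - j))%:R :> R.
    by have := @natr_bin_choose_twice R i j (M - j)%N; rewrite subnK //; apply; lia.
  rewrite /laguerre_coef; move: (gbinom _ _) => g.
  transitivity (g * (sign_fact R j * sign_fact R (i - j)) * ('C(i - j, M - j))%:R);
    first ring.
  rewrite sign_fact_mul; last by lia.
  transitivity (g * sign_fact R i * ('C(i, j) * 'C(i - j, M - j))%:R);
    first by rewrite natrM; ring.
  by rewrite -e2 natrM; ring.
rewrite (eq_bigr _ (fun j _ => factor_out j)) -mulr_sumr; congr (_ * _).
rewrite hkM gbinom_vandermonde_rev //; apply/andP; split => //; lia.
Qed.

(* The y^N coefficient of the right-hand side, as a combination of the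
   bridge polynomials (a Cauchy product, reordered by the index of a_k). *)
Lemma rhs_coef_bridge (lam : nat -> R) N :
  rhs_coef alpha lam N = \sum_(k < N.+1) acoef lam k *: bridge_poly N k.
Proof.
pose G (j m : nat) := if (j + m <= N)%N then
   acoef lam m *: (expmxy_coef R j * (laguerre_shift alpha m)`_(N - j - m)) else 0.
transitivity (\sum_(j < N.+1) \sum_(m < N.+1) G j m).
  rewrite /rhs_coef; apply: eq_bigr => j _; have hj := ltn_ord j.
  rewrite /laguerre_series_coef mulr_sumr.
  rewrite (big_ord_widen N.+1 (fun m => expmxy_coef R j *
      (acoef lam m *: (laguerre_shift alpha m)`_(N - j - m)))); last by lia.
  rewrite big_mkcond; apply: eq_bigr => m _; rewrite /G.
  by case: ifP => h; [rewrite ifT ?scalerAr // | rewrite ifF //]; lia.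
rewrite exchange_big; apply: eq_bigr => m _ /=; have hm := ltn_ord m.
rewrite -shift_product_bridge; last by lia.
rewrite scaler_sumr (big_ord_widen N.+1 (fun j => acoef lam m *:
    (expmxy_coef R j * (laguerre_shift alpha m)`_(N - m - j)))); last by lia.
rewrite [RHS]big_mkcond; apply: eq_bigr => j _; rewrite /G.
by case: ifP => h; [rewrite ifT 1?[in RHS]subnAC // | rewrite ifF //]; lia.
Qed.

Lemma rhs_coef_laguerre (lam : nat -> R) N :
  rhs_coef alpha lam N =
  \sum_(n < N.+1) (lam n * laguerre_weight N n) *: laguerre alpha n.
Proof.
rewrite rhs_coef_bridge.
under eq_bigr => k _ do rewrite -bridge_poly_laguerre -1?ltnS // scaler_sumr.
rewrite exchange_big /=; apply: eq_bigr => n _.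
under eq_bigr do rewrite scalerA.
rewrite -scaler_suml -(binomial_inversion lam (_ : (n <= N)%N)) ?mulr_suml;
  last by rewrite -ltnS.
by congr (_ *: _); apply: eq_bigr => k _; rewrite mulrA.
Qed.

End LaguerreExpansions.

Unset Implicit Arguments.

Theorem lemma2p2 (R : realFieldType) (alpha : R) (lam : nat -> R)
  (T : {poly R} -> {poly R}) :
  -1 < alpha ->
  (forall (c : R) (p q : {poly R}), T (c *: p + q) = c *: T p + T q) ->
  (forall n : nat, T (laguerre alpha n) = lam n *: laguerre alpha n) ->
  forall N : nat, symbol_coef T N = rhs_coef alpha lam N.
Proof.
move=> _ T_lin T_eig N.
have monomial_expansion : expmxy_coef R N =
    \sum_(n < N.+1) laguerre_weight alpha N n *: laguerre alpha n.
  rewrite -(bridge_poly0 alpha) -bridge_poly_laguerre //.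
  by apply: eq_bigr => n _; rewrite bin0 mul1r.
rewrite /symbol_coef -lin_opZ // -/(expmxy_coef R N) monomial_expansion.
rewrite lin_op_sum // rhs_coef_laguerre; apply: eq_bigr => n _.
by rewrite T_eig scalerA mulrC.
Qed.
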